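(* For every integer $n>2$, the number of pairs $(s,t)\in S_n\times S_n$ such that $[s,t]=sts^{-1}t^{-1}$ is a $3$-cycle and $s$ is an $n$-cycle equals $\binom{n}{3}\, n!$.
   Context: $S_n$ is the symmetric group on $\{1,\dots,n\}$; permutations compose as functions. *)

From mathcomp Require Import all_boot all_fingroup.
Set Implicit Arguments. Unset Strict Implicit. Unset Printing Implicit Defensive.
Local Open Scope group_scope.

(* Permutations of 'I_n (i.e. of {1,...,n} shifted to {0,...,n-1}).
   [is_kcycle k s]: s is a k-cycle, i.e. some point x has an s-orbit of
   size k and s fixes every point outside that orbit. *)
Definition is_kcycle (n k : nat) (s : 'S_n) : bool :=
  [exists x : 'I_n, (#|porbit s x| == k) &&
    [forall y : 'I_n, (y \notin porbit s x) ==> (s y == y)]].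

(* Composition as functions: (compf s t) x = s (t x).  Note mathcomp's
   group product (s * t) x = t (s x), so compf s t = t * s. *)
Definition compf (n : nat) (s t : 'S_n) : 'S_n := t * s.

Definition commf (n : nat) (s t : 'S_n) : 'S_n :=
  compf s (compf t (compf s^-1 t^-1)).

Lemma commfE n (s t : 'S_n) x : commf s t x = s (t (s^-1 (t^-1 x))).
Proof. by rewrite /commf /compf !permM. Qed.

(* In
   the group product of mathcomp (left factor applied first) [s, t] equals
   (s ^ t)^-1 * s, so for a fixed n-cycle s we sort the t by r = s ^ t:
   - r runs over the n-cycles, and each one is reached by exactly
     #|'C[s]| = n elements t (centraliser of an n-cycle, conjugacy fibres);
   - the r with r^-1 * s a 3-cycle correspond to the 3-cycles c with s * c an
     n-cycle; conjugating s to the standard n-cycle rot : i |-> i + 1, such a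
     c = (a b d) with a its least moved point works exactly when a < b < d,
     so there are C(n, 3) of them.
   Hence each n-cycle s contributes C(n, 3) * n pairs, and by the
   orbit-stabiliser theorem there are n! / n n-cycles, giving C(n, 3) * n!. *)

From mathcomp Require Import all_boot all_fingroup zify.
Set Implicit Arguments. Unset Strict Implicit. Unset Printing Implicit Defensive.
Local Open Scope group_scope.

Section PermOrbits.
Variable T : finType.
Implicit Types (s g : {perm T}) (x y : T).

Lemma porbit_closed s x y : y \in porbit s x -> s y \in porbit s x.
Proof. by move=> /porbitP[i ->]; rewrite -permM -expgSr; exact: mem_porbit. Qed.

Lemma porbit_sub s x (S : {set T}) :
  x \in S -> (forall y, y \in S -> s y \in S) -> porbit s x \subset S.
Proof.
move=> xS sS; apply/subsetP=> _ /porbitP[i ->]; elim: i => [|i IHi].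
  by rewrite expg0 perm1.
by rewrite expgSr permM; apply: sS.
Qed.

Lemma porbitJ s g x : porbit (s ^ g) (g x) = g @: porbit s x.
Proof.
have E i : ((s ^ g) ^+ i) (g x) = g ((s ^+ i) x) by rewrite -conjXg permJ.
apply/setP=> y; apply/porbitP/imsetP => [[i ->]|[z /porbitP[i ->] ->]].
  by exists ((s ^+ i) x); rewrite ?mem_porbit ?E.
by exists i; rewrite E.
Qed.

End PermOrbits.

Section ConjugacyFibers.
Variable gT : finGroupType.
Implicit Types x g t : gT.

Lemma conj_fiberE x t : [set g | x ^ g == x ^ t] = 'C[x] :* t.
Proof.
apply/setP=> g; rewrite inE mem_rcoset cent1C.
apply/eqP/cent1P => [xg | /commgP/conjg_fixP]; first apply/commgP/conjg_fixP.
  by rewrite conjgM xg conjgK.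
by rewrite conjgM => xgt; rewrite -{2}xgt conjgKV.
Qed.

Lemma card_conj_fiber x y : y \in x ^: [set: gT] ->
  #|[set g | x ^ g == y]| = #|'C[x]|.
Proof. by case/imsetP=> t _ ->; rewrite conj_fiberE card_rcoset. Qed.

Lemma card_class_cent1 x : (#|x ^: [set: gT]| * #|'C[x]|)%N = #|gT|.
Proof.
by rewrite -index_cent1 setTI mulnC -cardsT -(setTI 'C[x]) Lagrange ?subsetIl.
Qed.

End ConjugacyFibers.

Lemma card_fiber (A B : finType) (P : pred A) (f : A -> B) (S : {set B}) :
  (forall a, P a -> f a \in S) ->
  #|[set a | P a]| = \sum_(b in S) #|[set a | P a && (f a == b)]|.
Proof.
move=> PS; rewrite -sum1dep_card (partition_big f (mem S)) //.
by apply: eq_bigr => b _; rewrite sum1dep_card.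
Qed.

Lemma card_pair_fiber (A B : finType) (P : A -> B -> bool) a :
  #|[set ab : A * B | P ab.1 ab.2 && (ab.1 == a)]| = #|[set b | P a b]|.
Proof.
rewrite -[RHS](card_imset _ (fun b b' (e : (a, b) = (a, b')) => congr1 snd e)).
apply: eq_card => -[a' b]; rewrite !inE /=.
apply/andP/imsetP => [[Pab /eqP ea]|[b' Pb' [-> ->]]].
  by exists b; rewrite ?inE -?ea.
by rewrite inE in Pb'; split.
Qed.

Section Cycles.
Variable n : nat.
Implicit Types (s g u : 'S_n) (x y : 'I_n).

Lemma kcycleJ k s g : is_kcycle k (s ^ g) = is_kcycle k s.
Proof.
suff kJ (t h : 'S_n) : is_kcycle k t -> is_kcycle k (t ^ h).
  by apply/idP/idP => [/(kJ _ g^-1)|/kJ //]; rewrite conjgK.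
case/existsP=> x /andP[/eqP cx /forallP fix_out]; apply/existsP; exists (h x).
rewrite porbitJ card_imset ?cx ?eqxx //=; last exact: perm_inj.
apply/forallP=> y; apply/implyP=> yO; rewrite -[y](permKV h) permJ.
have /implyP/(_ _)/eqP -> // := fix_out (h^-1 y).
by apply: contra yO => yO'; rewrite -[y](permKV h); apply: imset_f.
Qed.

Lemma kcycleV k s : is_kcycle k s^-1 = is_kcycle k s.
Proof.
suff kV (t : 'S_n) : is_kcycle k t -> is_kcycle k t^-1.
  by apply/idP/idP => /kV //; rewrite invgK.
case/existsP=> x /andP[cx /forallP fix_out]; apply/existsP; exists x.
rewrite porbitV cx /=; apply/forallP=> y; apply/implyP => yO.
by move: (fix_out y); rewrite yO /= => /eqP {1}<-; rewrite permK.
Qed.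

Lemma kcycle_fullP s : reflect (exists x, porbit s x = setT) (is_kcycle n s).
Proof.
have full x : (porbit s x == setT) = (#|porbit s x| == n).
  have le_n : #|porbit s x| <= n by rewrite -[n in _ <= n]card_ord max_card.
  by rewrite eqEcard subsetT cardsT card_ord eqn_leq le_n.
apply: (iffP existsP) => [[x /andP[cx _]]|[x sx]].
  by exists x; apply/eqP; rewrite full.
exists x; rewrite -full sx eqxx /=; apply/forallP => y.
by rewrite inE.
Qed.

Lemma porbit_full s x y : porbit s x = setT -> porbit s y = setT.
Proof. by move=> sx; apply/eqP; rewrite -sx eq_porbit_mem sx inE. Qed.

(* The centraliser of an n-cycle s is <[s]>: a centralising u is determined
   by the image of one point, and every point is reached by a power of s. *)
Lemma card_cent1_full s : is_kcycle n s -> #|'C[s]| = n.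
Proof.
case/kcycle_fullP => x sx.
have pow y : exists i, y = (s ^+ i) x.
  by apply/porbitP; rewrite sx inE.
have comm_pow u i : u \in 'C[s] -> u ((s ^+ i) x) = (s ^+ i) (u x).
  by move=> /cent1P cu; rewrite -!permM (commuteX i cu).
rewrite -(card_in_imset (f := fun u : 'S_n => u x)) => [|u v uC vC /= eq_ux].
  rewrite -[n in _ = n]card_ord -cardsT; apply: eq_card => y.
  have [i ->] := pow y; rewrite inE; apply/imsetP.
  by exists (s ^+ i); rewrite ?groupX ?cent1id.
by apply/permP=> y; have [i ->] := pow y; rewrite !comm_pow // eq_ux.
Qed.

Definition rot : 'S_n := perm (can_inj (@ordSK n)).

Lemma rotE i : rot i = ordS i.
Proof. by rewrite permE. Qed.

Lemma rot_val (i : 'I_n) : i.+1 < n -> val (rot i) = i.+1.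
Proof. by move=> lt_in; rewrite rotE /= modn_small. Qed.

Lemma rot_pred (k : 'I_n) (lt_kn : k.-1 < n) : 0 < k -> rot (Ordinal lt_kn) = k.
Proof.
by move=> k_gt0; apply: val_inj; rewrite rot_val /= prednK ?ltn_ord.
Qed.

Lemma rot_full : 0 < n -> is_kcycle n rot.
Proof.
move=> n_gt0; apply/kcycle_fullP; exists (Ordinal n_gt0).
apply/setP => y; rewrite inE.
suff -> : y = (rot ^+ y) (Ordinal n_gt0) by apply: mem_porbit.
apply: val_inj; rewrite permX /=.
elim: (val y) (ltn_ord y) => [//|k IHk] lt_kn.
by rewrite iterS rot_val -IHk ?(ltnW lt_kn).
Qed.

(* Every n-cycle is conjugate to rot: relabel its orbit as 0, 1, ..., n-1. *)
Lemma full_cycle_conj s : is_kcycle n s -> s \in rot ^: [set: 'S_n].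
Proof.
case/kcycle_fullP => x sx.
have cx : #|porbit s x| = n by rewrite sx cardsT card_ord.
have U := uniq_traject_porbit s x; rewrite cx in U.
have g_inj : injective (fun i : 'I_n => (s ^+ i) x).
  move=> i j /= e; apply: val_inj; apply/eqP.
  rewrite -(nth_uniq x (s := traject s x n)) ?size_traject ?ltn_ord //.
  by rewrite !nth_traject ?ltn_ord // -!permX e.
apply/imsetP; exists (perm g_inj); rewrite ?inE //; apply/esym/permP => y.
rewrite -[y](permKV (perm g_inj)); set i := (perm g_inj)^-1 y.
rewrite permJ !permE -permM -expgSr /=.
case: (ltngtP i.+1 n) => [lt_in|gt_in|eq_in].
- by rewrite modn_small.
- by have := ltn_ord i; rewrite ltnNge -ltnS gt_in.
- by rewrite eq_in modnn expg0 perm1 permX; have := iter_porbit s x; rewrite cx.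
Qed.

Lemma card_full_cycles :
  0 < n -> (#|[set s : 'S_n | is_kcycle n s]| * n)%N = n`!.
Proof.
move=> n_gt0; have -> : [set s | is_kcycle n s] = rot ^: [set: 'S_n].
  apply/setP=> s; rewrite inE; apply/idP/idP => [/full_cycle_conj //|].
  by case/imsetP=> g _ ->; rewrite kcycleJ rot_full.
rewrite -[X in (_ * X)%N](card_cent1_full (rot_full n_gt0)).
by rewrite card_class_cent1 card_Sn.
Qed.

End Cycles.

Arguments rot {n}.

Section ThreeCycles.
Variable n : nat.
Implicit Types (c : 'S_n) (x y a b d : 'I_n).

(* The 3-cycle a -> b -> d -> a (the group product applies its left factor
   first). *)
Definition cyc3 a b d : 'S_n := tperm a b * tperm a d.

Lemma cyc3a a b d : a != b -> b != d -> cyc3 a b d a = b.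
Proof. by move=> ab bd; rewrite permM tpermL tpermD // eq_sym. Qed.

Lemma cyc3b a b d : cyc3 a b d b = d.
Proof. by rewrite permM tpermR tpermL. Qed.

Lemma cyc3d a b d : b != d -> d != a -> cyc3 a b d d = a.
Proof.
by move=> bd da; rewrite permM [tperm a b d]tpermD 1?(eq_sym a d) // tpermR.
Qed.

Lemma cyc3o a b d y : y != a -> y != b -> y != d -> cyc3 a b d y = y.
Proof. by move=> ya yb yd; rewrite permM !tpermD // eq_sym. Qed.

Lemma cyc3_moved a b d y : cyc3 a b d y != y -> [|| y == a, y == b | y == d].
Proof.
by apply: contraR; rewrite !negb_or => /and3P[ya yb yd]; rewrite cyc3o.
Qed.

Lemma cyc3_kcycle a b d :
  a != b -> b != d -> d != a -> is_kcycle 3 (cyc3 a b d).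
Proof.
move=> ab bd da; apply/existsP; exists a.
have orbit_a : porbit (cyc3 a b d) a =i [:: a; b; d].
  move=> y; apply/idP/idP => [yO|].
    suff : y \in [set z | z \in [:: a; b; d]] by rewrite inE.
    apply: (subsetP (porbit_sub _ _)) yO; first by rewrite !inE eqxx.
    move=> z; rewrite !inE => /or3P[] /eqP ->;
      by rewrite ?cyc3a ?cyc3b ?cyc3d ?eqxx ?orbT.
  rewrite !inE => /or3P[] /eqP ->; first exact: porbit_id.
    by have := mem_porbit (cyc3 a b d) 1 a; rewrite expg1 cyc3a.
  have := mem_porbit (cyc3 a b d) 2 a.
  by rewrite expgS expg1 permM cyc3a ?cyc3b.
rewrite (eq_card orbit_a) (card_uniqP _) /=; last first.
  by rewrite !inE negb_or ab bd eq_sym da.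
apply/forallP => y; apply/implyP; rewrite orbit_a !inE !negb_or.
by case/and3P=> ya yb yd; rewrite cyc3o.
Qed.

Lemma kcycle3_moved c : is_kcycle 3 c -> exists x, c x != x.
Proof.
case/existsP=> x /andP[/eqP c3 _]; exists x; apply/negP => /eqP cx.
have : porbit c x \subset [set x].
  apply: porbit_sub; rewrite ?inE // => y.
  by rewrite inE => /eqP ->; rewrite cx inE.
by move/subset_leq_card; rewrite cards1 c3.
Qed.

Lemma kcycle3_cyc3 c x : is_kcycle 3 c -> c x != x ->
  [/\ x != c x, c x != c (c x), c (c x) != x & c = cyc3 x (c x) (c (c x))].
Proof.
case/existsP => x0 /andP[/eqP c3 /forallP fix_out] cx.
have xO : x \in porbit c x0.
  by apply/negPn/negP => h; move: (implyP (fix_out x) h); rewrite (negbTE cx).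
have eqO : porbit c x = porbit c x0 by apply/eqP; rewrite eq_porbit_mem.
have c3x : #|porbit c x| = 3 by rewrite eqO.
have c3_id : c (c (c x)) = x by have := iter_porbit c x; rewrite c3x.
have := uniq_traject_porbit c x; rewrite c3x /= !inE !negb_or.
case/and3P=> /andP[h1 h2] h3 _; have h2' : c (c x) != x by rewrite eq_sym.
split => //; apply/permP => y; case: (boolP (y \in porbit c x)) => yO.
  rewrite porbit_traject c3x !inE in yO.
  by case/or3P: yO => /eqP ->; rewrite ?c3_id ?cyc3a ?cyc3b ?cyc3d // eq_sym.
have := fix_out y; rewrite -eqO yO /= => /eqP ->.
rewrite porbit_traject c3x !inE !negb_or in yO; case/and3P: yO => ya yb yd.
by rewrite cyc3o.
Qed.

End ThreeCycles.

Ltac ord_lia := simpl in *; lia.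

Section Orientation.
Variable n : nat.
Implicit Types (r : 'S_n) (x y a b d : 'I_n).

Lemma porbit_interval r x y (j : nat) : y \in porbit r x ->
  (forall k : 'I_n, y <= k < j -> val (r k) = k.+1) ->
  forall k : 'I_n, y <= k <= j -> k \in porbit r x.
Proof.
move=> yO r_succ.
suff S m : forall k : 'I_n, val k = y + m -> k <= j -> k \in porbit r x.
  by move=> k /andP[yk kj]; apply: (S (k - y)) => //; ord_lia.
elim: m => [|m IHm] k yk kj.
  by have -> : k = y by apply: val_inj; rewrite /= yk addn0.
have lt_ymn : y + m < n by have := ltn_ord k; ord_lia.
have -> : k = r (Ordinal lt_ymn).
  by apply: val_inj; rewrite /= r_succ /=; ord_lia.
by apply: porbit_closed; apply: IHm => /=; ord_lia.
Qed.

Section SortedTriple.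
Variables a b d : 'I_n.

(* r = rot * cyc3 a b d maps k to cyc3 a b d (k + 1 mod n). *)
Let r := rot * cyc3 a b d.

Lemma rot_cyc3_succ (k : 'I_n) :
  k.+1 < n -> k.+1 != a -> k.+1 != b -> k.+1 != d -> val (r k) = k.+1.
Proof. by move=> *; rewrite permM cyc3o ?rot_val // -val_eqE /= rot_val. Qed.

(* For a < b < d, the orbit of b under r runs through [b, d), then jumps to
   a and runs through [a, b), then jumps to d and runs through [d, n), and
   finally wraps around to [0, a): r is an n-cycle. *)
Lemma rot_cyc3_full : a < b -> b < d -> is_kcycle n r.
Proof.
move=> lt_ab lt_bd; have lt_dn := ltn_ord d.
have bd : b != d by rewrite -val_eqE /=; ord_lia.
have da : d != a by rewrite -val_eqE /=; ord_lia.
apply/kcycle_fullP; exists b; set O := porbit r b.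
have O_bd : forall k : 'I_n, b <= k <= d.-1 -> k \in O.
  apply: (porbit_interval (porbit_id r b)) => k hk.
  by apply: rot_cyc3_succ; ord_lia.
have ld : d.-1 < n by ord_lia.
have aO : a \in O.
  have <- : r (Ordinal ld) = a by rewrite permM rot_pred ?cyc3d //; ord_lia.
  by apply: porbit_closed; apply: O_bd => /=; ord_lia.
have O_ab : forall k : 'I_n, a <= k <= b.-1 -> k \in O.
  apply: (porbit_interval aO) => k hk; apply: rot_cyc3_succ; ord_lia.
have lb : b.-1 < n by ord_lia.
have dO : d \in O.
  have <- : r (Ordinal lb) = d by rewrite permM rot_pred ?cyc3b //; ord_lia.
  by apply: porbit_closed; apply: O_ab => /=; ord_lia.
have O_dn : forall k : 'I_n, d <= k <= n.-1 -> k \in O.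
  apply: (porbit_interval dO) => k hk; apply: rot_cyc3_succ; ord_lia.
have ln : n.-1 < n by ord_lia.
have n_gt0 : 0 < n by ord_lia.
have zO : Ordinal n_gt0 \in O.
  have [a0|a_gt0] := eqVneq (val a) 0.
    by have -> : Ordinal n_gt0 = a by apply: val_inj; rewrite /= a0.
  have <- : r (Ordinal ln) = Ordinal n_gt0.
    rewrite permM; have -> : rot (Ordinal ln) = Ordinal n_gt0.
      by apply: val_inj; rewrite rotE /= prednK ?modnn.
    by rewrite cyc3o // -val_eqE /=; ord_lia.
  by apply: porbit_closed; apply: O_dn => /=; ord_lia.
have O_0a : forall k : 'I_n, 0 <= k <= a.-1 -> k \in O.
  apply: (porbit_interval zO) => k hk; apply: rot_cyc3_succ; ord_lia.
apply/setP => k; rewrite inE; have := ltn_ord k => kn.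
case: (ltnP k a) => ka; first by apply: O_0a; ord_lia.
case: (ltnP k b) => kb; first by apply: O_ab; ord_lia.
case: (ltnP k d) => kd; first by apply: O_bd; ord_lia.
by apply: O_dn; ord_lia.
Qed.

(* For a < d < b instead, the orbit of a never leaves [a, b). *)
Lemma rot_cyc3_not_full : a < d -> d < b -> ~~ is_kcycle n r.
Proof.
move=> lt_ad lt_db; have lt_bn := ltn_ord b.
have bd : b != d by rewrite -val_eqE /=; ord_lia.
have da : d != a by rewrite -val_eqE /=; ord_lia.
apply/negP => /kcycle_fullP [x rx].
have sub : porbit r a \subset [set k : 'I_n | a <= k < b].
  apply: porbit_sub => [|k]; first by rewrite inE leqnn /=; ord_lia.
  rewrite !inE => /andP[ak kb]; rewrite permM.
  have rotk : val (rot k) = k.+1 by rewrite rot_val //; ord_lia.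
  have [->|rb] := eqVneq (rot k) b; first by rewrite cyc3b; ord_lia.
  have [->|rd] := eqVneq (rot k) d; first by rewrite cyc3d; ord_lia.
  have ra : rot k != a by rewrite -val_eqE rotk; ord_lia.
  by rewrite cyc3o // rotk; move: rb; rewrite -val_eqE rotk; ord_lia.
have := subsetP sub b; rewrite (porbit_full a rx) inE => /(_ isT).
by rewrite inE; ord_lia.
Qed.

End SortedTriple.
End Orientation.

Section CountThreeCycles.
Variable n : nat.
Implicit Types (c : 'S_n) (a b d : 'I_n).

Definition cyc3_of (t : 3.-tuple 'I_n) : 'S_n :=
  if val t is [:: a; b; d] then cyc3 a b d else 1.

Lemma tuple3P (t : 3.-tuple 'I_n) : exists a b d, val t = [:: a; b; d].
Proof.
case: t => s sz /=; move: sz; case: s => [|a [|b [|d [|? ?]]]] // _.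
by exists a, b, d.
Qed.

Lemma ltn_distinct a b d : a < b -> b < d -> [/\ a != b, b != d & d != a].
Proof. by move=> *; split; rewrite -val_eqE /=; ord_lia. Qed.

Lemma kcycle3_least c : is_kcycle 3 c ->
  exists a b d, [/\ a < b, a < d, b != d & c = cyc3 a b d].
Proof.
move=> c3; have [x0 cx0] := kcycle3_moved c3.
have [a ca a_min] := @arg_minnP _ x0 (fun i => c i != i) val cx0.
have [h1 h2 h3 c_eq] := kcycle3_cyc3 c3 ca.
have c3_id : c (c (c a)) = a by have := cyc3d h2 h3; rewrite -c_eq.
exists a, (c a), (c (c a)); split=> //.
- have := a_min (c a); rewrite eq_sym => /(_ h2).
  by move: h1; rewrite -val_eqE /= => ?; ord_lia.
- have := a_min (c (c a)); rewrite c3_id eq_sym => /(_ h3).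
  by move: h3; rewrite -val_eqE /= => ?; ord_lia.
Qed.

Lemma cyc3_sorted_inj a b d a' b' d' :
  a < b < d -> a' < b' < d' -> cyc3 a b d = cyc3 a' b' d' ->
  [/\ a = a', b = b' & d = d'].
Proof.
move=> /andP[ab bd] /andP[ab' bd'] E.
have [d1 d2 d3] := ltn_distinct ab bd.
have [d1' d2' d3'] := ltn_distinct ab' bd'.
have m1 : cyc3 a b d a' != a' by rewrite E cyc3a // eq_sym.
have m2 : cyc3 a' b' d' a != a by rewrite -E cyc3a // eq_sym.
have eq_a : a = a'.
  apply: val_inj; apply/eqP; rewrite eqn_leq; apply/andP; split.
    by case/or3P: (cyc3_moved m1) => /eqP ->; ord_lia.
  by case/or3P: (cyc3_moved m2) => /eqP ->; ord_lia.
subst a'; have eq_b : b = b' by rewrite -(cyc3a d1 d2) E cyc3a.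
by subst b'; split=> //; rewrite -(cyc3b a b d) E cyc3b.
Qed.

(* Product of rot with a 3-cycle: exactly one of the two orientations of
   each 3-element subset of 'I_n gives an n-cycle. *)
Lemma card_rot_cyc3 :
  #|[set c : 'S_n | is_kcycle 3 c && is_kcycle n (rot * c)]| = 'C(n, 3).
Proof.
rewrite -card_ltn_sorted_tuples -(card_in_imset (f := cyc3_of)); last first.
  move=> t1 t2; rewrite !inE.
  have [a [b [d e1]]] := tuple3P t1; have [a' [b' [d' e2]]] := tuple3P t2.
  rewrite /cyc3_of e1 e2 => s1 s2.
  rewrite e1 /= andbT in s1; rewrite e2 /= andbT in s2.
  case/(cyc3_sorted_inj s1 s2) => ea eb ed.
  by apply: val_inj; rewrite e1 e2 ea eb ed.
apply: eq_card => c; rewrite inE; apply/andP/imsetP => [[c3 cn]|].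
  have [a [b [d [ab ad bd c_eq]]]] := kcycle3_least c3; rewrite c_eq in cn *.
  have [lt_bd|lt_db|eq_bd] := ltngtP b d.
  - by exists [tuple a; b; d]; rewrite // inE /= ab lt_bd.
  - by move: cn; rewrite (negbTE (rot_cyc3_not_full ad lt_db)).
  - by move: bd; rewrite -val_eqE /= eq_bd eqxx.
case=> t; rewrite inE => t_sorted ->.
have [a [b [d e]]] := tuple3P t; rewrite /cyc3_of e.
move: t_sorted; rewrite e /= andbT => /andP[ab bd].
have [d1 d2 d3] := ltn_distinct ab bd.
by rewrite cyc3_kcycle // rot_cyc3_full.
Qed.

End CountThreeCycles.

Section CommutatorCount.
Variable n : nat.
Implicit Types (s r t g c : 'S_n).

Lemma commf_conj s t : commf s t = (s ^ t)^-1 * s.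
Proof. by rewrite /commf /compf -conjVg conjgE !mulgA. Qed.

(* For any n-cycle s there are C(n, 3) 3-cycles c with s * c an n-cycle:
   conjugate s to rot. *)
Lemma card_full_cyc3 s : is_kcycle n s ->
  #|[set c | is_kcycle 3 c && is_kcycle n (s * c)]| = 'C(n, 3).
Proof.
case/full_cycle_conj/imsetP => g _ ->.
rewrite -(card_rot_cyc3 n) -(cardJg _ g^-1); apply: eq_card => c.
by rewrite mem_conjg invgK !inE -conjMg !kcycleJ.
Qed.

(* For an n-cycle s, the t with [s, t] a 3-cycle: r = s ^ t ranges over the
   n-cycles with r^-1 * s a 3-cycle, each reached by #|'C[s]| = n values of
   t; and r |-> (s^-1 * r)^-1 identifies these r with the c counted above. *)
Lemma card_commf_kcycle3 s : is_kcycle n s ->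
  #|[set t | is_kcycle 3 (commf s t)]| = ('C(n, 3) * n)%N.
Proof.
move=> sn; set S := [set r : 'S_n | is_kcycle n r].
rewrite (card_fiber (f := fun t => s ^ t) (S := S)) => [|t _]; last first.
  by rewrite inE kcycleJ.
have fiber r : r \in S -> #|[set t | is_kcycle 3 (commf s t) && (s ^ t == r)]|
    = if is_kcycle 3 (r^-1 * s) then n else 0.
  rewrite inE => rn; have s_r : r \in s ^: [set: 'S_n].
    by rewrite (class_transl _ (full_cycle_conj rn)) class_sym full_cycle_conj.
  case: ifP => r3; last first.
    apply/eqP; rewrite cards_eq0; apply/eqP/setP => t; rewrite !inE.
    by rewrite commf_conj; case: eqP => [->|]; rewrite ?andbF ?r3.
  rewrite -[RHS](card_cent1_full sn) -(card_conj_fiber s_r).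
  apply: eq_card => t.
  by rewrite !inE commf_conj; case: eqP => [->|]; rewrite ?andbF ?andbT.
rewrite (eq_bigr _ fiber) -big_mkcondr /= sum_nat_const; congr (_ * _)%N.
rewrite -(card_full_cyc3 sn) -(card_lcoset _ s); apply: eq_card => r.
rewrite mem_lcoset !inE mulKVg -[is_kcycle 3 (s^-1 * r)]kcycleV invMg invgK.
by rewrite unfold_in /= inE andbC.
Qed.

End CommutatorCount.

Local Close Scope group_scope.

Theorem mainTheorem2 (n : nat) (hn : 2 < n) :
  #|[set st : 'S_n * 'S_n |
       is_kcycle 3 (commf st.1 st.2) && is_kcycle n st.1 ]|
  = 'C(n, 3) * n`!.
Proof.
have n_gt0 : 0 < n by apply: leq_trans hn.
rewrite (card_fiber (f := fst) (S := [set s | is_kcycle n s])); last first.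
  by move=> st /andP[_]; rewrite inE.
rewrite (eq_bigr (fun _ => 'C(n, 3) * n)) => [|s]; last first.
  rewrite inE => sn; rewrite -(card_commf_kcycle3 sn).
  rewrite -(card_pair_fiber (fun s t => is_kcycle 3 (commf s t))).
  apply: eq_card => -[s' t]; rewrite !inE /=.
  by case: eqP => [->|]; rewrite ?andbF ?sn ?andbT.
by rewrite sum_nat_const mulnCA (card_full_cycles n_gt0).
Qed.
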